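(* Let $(Y_n)$ satisfy Condition 1 with constant $\alpha$, and fix an integer $a\ge1$. For $i\ge1$ let $\pi_i(n)$ be the probability that, in the leader election process started with $n$ players (stopped as soon as at most $a$ players remain), there is some round after which exactly $i$ players remain (i.e. $N_k=i$ for some $k$ up to the stopping time). Then for every $i\ge1$ there is a continuous, locally Lipschitz function $\psi_i$ on $(0,\infty)$ with $\psi_i(\alpha t)=\psi_i(t)$ such that $\pi_i(n)=\psi_i(n)+o(1)$ as $n\to\infty$.
   Context: Condition 1: $(Y_n)_{n\ge1}$ is a sequence of random variables with $1\le Y_n\le n$ for all $n$ and $\Pr(Y_n=n)<1$ for $n\ge2$, such that: (i) $\Pr(Y_n\le k)\ge\Pr(Y_{n+1}\le k)$ for all $n,k\ge1$; (ii) there are constants $\alpha\in(0,1)$, $\varepsilon>0$ and $\delta_n=O((\log n)^{-1-\varepsilon})$ with $\mathbb E Y_{n+1}-\mathbb E Y_n=\alpha+O(\delta_n)$; (iii) $\Pr(|Y_n-\alpha n|>\delta_n n)=O(n^{-2-\varepsilon})$. Leader election process: $N_0=n$ and $(N_k)$ is the Markov chain on $\{1,2,\dots\}$ with $\Pr(N_{k+1}=j\mid N_k=i)=\Pr(Y_i=j)$. *)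

From Stdlib Require Import Reals Lra Lia Arith.
Open Scope R_scope.

(* The law of Y_n is encoded by its probability mass function:
   p n j = Pr(Y_n = j).  *)

Definition is_pmf_family (p : nat -> nat -> R) : Prop :=
  forall n : nat, (1 <= n)%nat ->
    (forall j, 0 <= p n j) /\
    p n 0%nat = 0 /\
    (forall j, (n < j)%nat -> p n j = 0) /\
    sum_f_R0 (p n) n = 1.

Definition cdf (p : nat -> nat -> R) (n k : nat) : R := sum_f_R0 (p n) k.

Definition mean (p : nat -> nat -> R) (n : nat) : R :=
  sum_f_R0 (fun j => INR j * p n j) n.

Definition dev_prob (p : nat -> nat -> R) (alpha : R) (delta : nat -> R) (n : nat) : R :=
  sum_f_R0 (fun j => if Rlt_dec (delta n * INR n) (Rabs (INR j - alpha * INR n))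
                     then p n j else 0) n.

Definition condition1 (p : nat -> nat -> R) (alpha : R) : Prop :=
  is_pmf_family p /\
  (forall n, (2 <= n)%nat -> p n n < 1) /\
  (forall n k, (1 <= n)%nat -> (1 <= k)%nat -> cdf p n k >= cdf p (S n) k) /\
  0 < alpha < 1 /\
  exists (eps : R) (delta : nat -> R), 0 < eps /\
    (exists C N, (2 <= N)%nat /\ forall n, (N <= n)%nat ->
        Rabs (delta n) <= C * Rpower (ln (INR n)) (- 1 - eps)) /\
    (exists C N, forall n, (N <= n)%nat ->
        Rabs (mean p (S n) - mean p n - alpha) <= C * Rabs (delta n)) /\
    (exists C N, (1 <= N)%nat /\ forall n, (N <= n)%nat ->
        dev_prob p alpha delta n <= C * Rpower (INR n) (- 2 - eps)).

(* visit_within p a i K m : probability that the leader election process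
   started from N_0 = m, stopped as soon as at most a players remain,
   has N_k = i for some k <= min(T, K) (T the stopping time).
   This is the finite path-sum, written recursively via the Markov property. *)
Fixpoint visit_within (p : nat -> nat -> R) (a i : nat) (K : nat) (m : nat) : R :=
  if Nat.eqb m i then 1
  else match K with
       | O => 0
       | S K' => if Nat.leb m a then 0
                 else sum_f_R0 (fun j => p m j * visit_within p a i K' j) m
       end.

Definition locally_lipschitz_pos (psi : R -> R) : Prop :=
  forall t, 0 < t -> exists r L, 0 < r < t /\ 0 <= L /\
    forall x y, Rabs (x - t) < r -> Rabs (y - t) < r ->
      Rabs (psi x - psi y) <= L * Rabs (x - y).

From Stdlib Require Import Reals Lra Lia Arith ZArith ClassicalEpsilon.
Open Scope R_scope.

(** Write [f n = pi_i(n)] for the probability that the process started at [n]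
    visits [i]; it is the increasing limit of the path sums [visit_within].
    The proof follows three steps.

    1. Markov property: above the stopping level [a] and away from [i], [f] is
       harmonic for the kernel [p].  Summing by parts, [f (n+1) - f n] is an
       average of increments [f (j+1) - f j] with nonnegative weights
       [P(Y_n <= j) - P(Y_(n+1) <= j)] of total mass [E Y_(n+1) - E Y_n ~ alpha];
       by Condition 1 the weights concentrate on [j ~ alpha n].
    2. A discrete Gronwall induction along the potential
       [Phi x = A (ln x)^-e + B x^-e + C / x], whose decrease from [g n] to
       [n] dominates the error terms [|delta_n| + n^-e + 1/n] of Condition 1,
       gives [|f (n+1) - f n| <= L / n], and then
       [|f m - f r| <= Phi (g m) - Phi m] whenever [r ~ alpha m].
    3. Hence [k |-> f (floor (t alpha^-k))] is Cauchy; its limit [psi t] is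
       [alpha]-periodic, locally Lipschitz (from step 2), and [f n - psi n -> 0]. *)

Lemma cv_le_eventually (U : nat -> R) l c N :
  Un_cv U l -> (forall n, (N <= n)%nat -> U n <= c) -> l <= c.
Proof.
  intros Hcv HU. destruct (Rle_dec l c) as [H|H]; auto.
  destruct (Hcv (l - c) ltac:(lra)) as [M HM].
  specialize (HM (max N M) ltac:(lia)). specialize (HU (max N M) ltac:(lia)).
  unfold Rdist in HM. apply Rabs_def2 in HM. lra.
Qed.

Lemma cv_ge_eventually (U : nat -> R) l c N :
  Un_cv U l -> (forall n, (N <= n)%nat -> c <= U n) -> c <= l.
Proof.
  intros Hcv HU. destruct (Rle_dec c l) as [H|H]; auto.
  destruct (Hcv (c - l) ltac:(lra)) as [M HM].
  specialize (HM (max N M) ltac:(lia)). specialize (HU (max N M) ltac:(lia)).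
  unfold Rdist in HM. apply Rabs_def2 in HM. lra.
Qed.

Lemma cv_finite_sum (c : nat -> R) (u : nat -> nat -> R) (l : nat -> R) n :
  (forall j, (j <= n)%nat -> Un_cv (fun K => u K j) (l j)) ->
  Un_cv (fun K => sum_f_R0 (fun j => c j * u K j) n) (sum_f_R0 (fun j => c j * l j) n).
Proof.
  assert (Hconst : forall x : R, Un_cv (fun _ => x) x).
  { intros x eps Heps. exists 0%nat. intros. unfold Rdist. rewrite Rminus_diag, Rabs_R0. lra. }
  induction n as [|n IH]; intros H; simpl.
  - apply CV_mult; [apply Hconst | apply H; lia].
  - apply CV_plus; [apply IH; intros; apply H; lia|].
    apply CV_mult; [apply Hconst | apply H; lia].
Qed.

Lemma abel_summation (q h : nat -> R) M :
  sum_f_R0 (fun j => q j * h j) (S M) =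
  sum_f_R0 q (S M) * h (S M) - sum_f_R0 (fun j => sum_f_R0 q j * (h (S j) - h j)) M.
Proof.
  induction M as [|M IH].
  - simpl. ring.
  - rewrite (tech5 (fun j => q j * h j) (S M)), IH, (tech5 q (S M)),
      (tech5 (fun j => sum_f_R0 q j * (h (S j) - h j)) M).
    ring.
Qed.

Lemma sum_truncate (u : nat -> R) j N : (j <= N)%nat ->
  sum_f_R0 (fun k => if Nat.leb k j then u k else 0) N = sum_f_R0 u j.
Proof.
  intros H. induction H as [|N HjN IH].
  - apply sum_eq. intros k Hk. destruct (Nat.leb_spec k j); [reflexivity | lia].
  - rewrite tech5, IH. destruct (Nat.leb_spec (S N) j); [lia | ring].
Qed.

Lemma Rabs_le_bounds x b : Rabs x <= b -> - b <= x <= b.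
Proof.
  intros H. pose proof (Rle_abs x). pose proof (Rle_abs (- x)). rewrite Rabs_Ropp in H1. lra.
Qed.

Lemma nat_eventually_above x : exists N : nat, forall n, (N <= n)%nat -> x <= INR n.
Proof.
  destruct (INR_archimed 1 x ltac:(lra)) as [N HN]. exists N. intros n Hn.
  apply le_INR in Hn. lra.
Qed.

Lemma pow_eventually_above b M : 1 < b -> exists k, forall k', (k <= k')%nat -> M <= b ^ k'.
Proof.
  intros Hb. destruct (Pow_x_infinity b ltac:(rewrite Rabs_pos_eq; lra) M) as [k Hk].
  exists k. intros k' Hk'. specialize (Hk k' Hk').
  rewrite Rabs_pos_eq in Hk by (apply pow_le; lra). lra.
Qed.

Definition floor_nat (x : R) : nat := Z.to_nat (Int_part x).

Lemma floor_nat_spec x : 0 <= x -> INR (floor_nat x) <= x < INR (floor_nat x) + 1.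
Proof.
  intros Hx. destruct (base_Int_part x) as [H1 H2].
  assert (Hz : (0 <= Int_part x)%Z).
  { assert (Hlt : -1 < IZR (Int_part x)) by lra. apply lt_IZR in Hlt. lia. }
  unfold floor_nat. rewrite INR_IZR_INZ, Z2Nat.id by exact Hz. lra.
Qed.

Lemma floor_nat_INR n : floor_nat (INR n) = n.
Proof.
  destruct (floor_nat_spec (INR n) (pos_INR n)) as [H1 H2].
  destruct (Nat.lt_trichotomy (floor_nat (INR n)) n) as [Hl|[He|Hg]]; auto.
  - apply le_INR in Hl. rewrite S_INR in Hl. lra.
  - apply lt_INR in Hg. lra.
Qed.

Lemma floor_nat_mono x y : 0 <= x -> x <= y -> (floor_nat x <= floor_nat y)%nat.
Proof.
  intros Hx Hxy. destruct (floor_nat_spec x Hx) as [A1 A2].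
  destruct (floor_nat_spec y ltac:(lra)) as [B1 B2].
  destruct (Nat.le_gt_cases (floor_nat x) (floor_nat y)) as [H|H]; auto.
  apply le_INR in H. rewrite S_INR in H. lra.
Qed.

Lemma exp_le_mono x y : x <= y -> exp x <= exp y.
Proof. intros [H|H]; [left; apply exp_increasing; auto | subst; lra]. Qed.

Lemma ln_le_mono x y : 0 < x -> x <= y -> ln x <= ln y.
Proof. intros Hx [H|H]; [left; apply ln_increasing; auto | subst; lra]. Qed.

Lemma Rpower_pos x y : 0 < Rpower x y.
Proof. apply exp_pos. Qed.

Lemma Rpower_neg_antimono x y e : 0 < x -> x <= y -> 0 <= e -> Rpower y (- e) <= Rpower x (- e).
Proof.
  intros Hx Hxy He. unfold Rpower. apply exp_le_mono.
  assert (ln x <= ln y) by (apply ln_le_mono; auto). nra.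
Qed.

Lemma Rpower_neg_vanish e eta : 0 < e -> 0 < eta ->
  exists X, forall x, X <= x -> Rpower x (- e) <= eta.
Proof.
  intros He Heta. exists (exp (- ln eta / e)). intros x Hx. unfold Rpower.
  assert (Hx0 : 0 < x) by (pose proof (exp_pos (- ln eta / e)); lra).
  apply ln_le_mono in Hx; [|apply exp_pos]. rewrite ln_exp in Hx.
  rewrite <- (exp_ln eta) by lra. apply exp_le_mono.
  apply Rmult_le_compat_l with (r := e) in Hx; [|lra].
  replace (e * (- ln eta / e)) with (- ln eta) in Hx by (field; lra). lra.
Qed.

Lemma Rpower_minus1 x e : 0 < x -> Rpower x (-1 - e) = Rpower x (- e) / x.
Proof.
  intros Hx. replace (-1 - e) with (- (1) + - e) by ring.
  rewrite Rpower_plus, Rpower_Ropp, Rpower_1 by auto. unfold Rdiv. ring.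
Qed.

Lemma Rpower_minus2 x e : 0 < x -> Rpower x (-2 - e) = Rpower x (- e) / (x * x).
Proof.
  intros Hx. replace (-2 - e) with (- (1) + (-1 - e)) by ring.
  rewrite Rpower_plus, Rpower_Ropp, Rpower_1, Rpower_minus1 by auto. field. lra.
Qed.

Lemma Rpower_neg_gt1 g e : 0 < g < 1 -> 0 < e -> 1 < Rpower g (- e).
Proof.
  intros Hg He. unfold Rpower.
  assert (Hl : ln g < 0) by (rewrite <- ln_1; apply ln_increasing; lra).
  pose proof (exp_ineq1_le (- e * ln g)). nra.
Qed.

Lemma Rpower_neg_decrease u v e : 0 < u -> u <= v -> 0 < e ->
  e * (v - u) * Rpower v (-1 - e) <= Rpower u (- e) - Rpower v (- e).
Proof.
  intros Hu Huv He. rewrite Rpower_minus1 by lra.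
  assert (Hd : (v - u) / v <= ln v - ln u).
  { assert (Hq : 0 < v * / u) by (apply Rmult_lt_0_compat; [lra | apply Rinv_0_lt_compat; lra]).
    pose proof (exp_ineq1_le (ln (/ (v * / u)))) as Hl.
    rewrite exp_ln in Hl by (apply Rinv_0_lt_compat; lra).
    rewrite ln_Rinv, ln_mult, ln_Rinv in Hl by (try apply Rinv_0_lt_compat; lra).
    replace ((v - u) / v) with (1 - / (v * / u)) by (field; split; lra). lra. }
  unfold Rpower.
  replace (- e * ln u) with (- e * ln v + e * (ln v - ln u)) by ring.
  rewrite exp_plus.
  pose proof (exp_ineq1_le (e * (ln v - ln u))).
  pose proof (exp_pos (- e * ln v)).
  assert (e * ((v - u) / v) <= e * (ln v - ln u)) by (apply Rmult_le_compat_l; lra).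
  replace (e * (v - u) * (exp (- e * ln v) / v))
    with (exp (- e * ln v) * (e * ((v - u) / v))) by (field; lra).
  nra.
Qed.

Definition is_potential (Phi : R -> R) : Prop :=
  (forall x y, 2 <= x -> x <= y -> Phi y <= Phi x) /\
  (forall x, 2 <= x -> 0 <= Phi x) /\
  (forall eta, 0 < eta -> exists X, 2 <= X /\ forall x, X <= x -> Phi x <= eta).

(** The potential that dominates the error terms of Condition 1. *)
Definition log_potential (A B C e : R) (x : R) : R :=
  A * Rpower (ln x) (- e) + B * Rpower x (- e) + C / x.

Lemma log_potential_is_potential A B C e :
  0 <= A -> 0 <= B -> 0 <= C -> 0 < e -> is_potential (log_potential A B C e).
Proof.
  intros HA HB HC He. unfold log_potential. split; [|split].
  - intros x y Hx Hxy.
    assert (Hl2 : 0 < ln 2) by (pose proof ln_lt_2; lra).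
    assert (ln 2 <= ln x) by (apply ln_le_mono; lra).
    assert (ln x <= ln y) by (apply ln_le_mono; lra).
    assert (Rpower (ln y) (- e) <= Rpower (ln x) (- e)) by (apply Rpower_neg_antimono; lra).
    assert (Rpower y (- e) <= Rpower x (- e)) by (apply Rpower_neg_antimono; lra).
    assert (/ y <= / x) by (apply Rinv_le_contravar; lra).
    unfold Rdiv. nra.
  - intros x Hx. pose proof (Rpower_pos (ln x) (- e)). pose proof (Rpower_pos x (- e)).
    assert (0 < / x) by (apply Rinv_0_lt_compat; lra). unfold Rdiv. nra.
  - intros eta Heta.
    set (t := eta / (3 * (A + B + C + 1))).
    assert (Ht : 0 < t) by (unfold t; apply Rdiv_lt_0_compat; lra).
    destruct (Rpower_neg_vanish e t He Ht) as [X HXt].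
    exists (Rmax 2 (Rmax (exp X) (Rmax X (/ t)))).
    split; [apply Rmax_l|]. intros x Hx.
    pose proof (Rmax_l 2 (Rmax (exp X) (Rmax X (/ t)))).
    pose proof (Rmax_l (exp X) (Rmax X (/ t))). pose proof (Rmax_r (exp X) (Rmax X (/ t))).
    pose proof (Rmax_l X (/ t)). pose proof (Rmax_r X (/ t)).
    pose proof (Rmax_r 2 (Rmax (exp X) (Rmax X (/ t)))).
    assert (Hlx : X <= ln x) by (rewrite <- (ln_exp X); apply ln_le_mono; [apply exp_pos | lra]).
    assert (Hlog := HXt _ Hlx). assert (Hpow := HXt x ltac:(lra)).
    assert (Hinv : / x <= t) by (rewrite <- (Rinv_inv t); apply Rinv_le_contravar;
                               [apply Rinv_0_lt_compat; lra | lra]).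
    assert (Hsum : (A + B + C) * t <= eta).
    { apply Rle_trans with ((A + B + C + 1) * t); [apply Rmult_le_compat_r; lra|].
      unfold t. replace ((A + B + C + 1) * (eta / (3 * (A + B + C + 1)))) with (eta / 3)
        by (field; lra). lra. }
    unfold Rdiv. nra.
Qed.

Definition error_term (delta : nat -> R) (e : R) (n : nat) : R :=
  Rabs (delta n) + Rpower (INR n) (- e) + / INR n.

(** Each summand of [error_term] is a telescoping increment of the matching
    summand of [log_potential] between [g x] and [x]. *)
Lemma log_term_telescopes g e x : 0 < g < 1 -> 0 < e -> 2 <= g * x ->
  Rpower (ln x) (-1 - e) <= / (e * - ln g) * (Rpower (ln (g * x)) (- e) - Rpower (ln x) (- e)).
Proof.
  intros Hg He Hgx.
  assert (Hlg : ln g < 0) by (rewrite <- ln_1; apply ln_increasing; lra).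
  assert (Hl2 : 0 < ln (g * x)).
  { pose proof ln_lt_2. pose proof (ln_le_mono 2 _ ltac:(lra) Hgx). lra. }
  assert (Hgxx : g * x <= x) by nra.
  assert (Hlm : ln (g * x) <= ln x) by (apply ln_le_mono; lra).
  pose proof (Rpower_neg_decrease (ln (g * x)) (ln x) e Hl2 Hlm He) as Hb.
  replace (ln x - ln (g * x)) with (- ln g) in Hb by (rewrite ln_mult by lra; ring).
  apply Rmult_le_reg_l with (e * - ln g); [nra|].
  rewrite <- Rmult_assoc, Rinv_r, Rmult_1_l by nra. lra.
Qed.

Lemma power_term_telescopes g e x : 0 < g < 1 -> 0 < e -> 0 < x ->
  Rpower x (- e) = / (Rpower g (- e) - 1) * (Rpower (g * x) (- e) - Rpower x (- e)).
Proof.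
  intros Hg He Hx. rewrite <- Rpower_mult_distr by lra.
  pose proof (Rpower_neg_gt1 g e Hg He). field. lra.
Qed.

Lemma inverse_term_telescopes g x : 0 < g < 1 -> 0 < x ->
  / x = / (/ g - 1) * (/ (g * x) - / x).
Proof.
  intros Hg Hx. assert (1 < / g) by (rewrite <- Rinv_1; apply Rinv_lt_contravar; lra).
  field. repeat split; lra.
Qed.

Lemma error_term_below_potential (g e C1 c : R) (N1 : nat) (delta : nat -> R) :
  0 < g < 1 -> 0 < e -> 0 <= c ->
  (forall n, (N1 <= n)%nat -> Rabs (delta n) <= C1 * Rpower (ln (INR n)) (-1 - e)) ->
  exists Phi N, is_potential Phi /\
    forall n, (N <= n)%nat -> c * error_term delta e n <= Phi (g * INR n) - Phi (INR n).
Proof.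
  intros Hg He Hc Hdelta.
  assert (Hlg : ln g < 0) by (rewrite <- ln_1; apply ln_increasing; lra).
  pose proof (Rpower_neg_gt1 g e Hg He) as Hge.
  assert (Hig : 1 < / g) by (rewrite <- Rinv_1; apply Rinv_lt_contravar; lra).
  set (A := c * Rabs C1 * / (e * - ln g)).
  set (B := c * / (Rpower g (- e) - 1)).
  set (C := c * / (/ g - 1)).
  assert (HA : 0 <= A).
  { unfold A. pose proof (Rabs_pos C1).
    assert (0 < / (e * - ln g)) by (apply Rinv_0_lt_compat; nra). apply Rmult_le_pos; nra. }
  assert (HB : 0 <= B) by (unfold B; assert (0 < / (Rpower g (- e) - 1)) by (apply Rinv_0_lt_compat; lra); nra).
  assert (HC : 0 <= C) by (unfold C; assert (0 < / (/ g - 1)) by (apply Rinv_0_lt_compat; lra); nra).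
  destruct (nat_eventually_above (2 / g)) as [N2 HN2].
  exists (log_potential A B C e), (max N1 N2).
  split; [apply log_potential_is_potential; auto|].
  intros n Hn.
  assert (Hgn : 2 <= g * INR n).
  { assert (H2g : 2 / g <= INR n) by (apply HN2; lia).
    apply Rmult_le_compat_l with (r := g) in H2g; [|lra].
    replace (g * (2 / g)) with 2 in H2g by (field; lra). exact H2g. }
  assert (Hn0 : 0 < INR n) by nra.
  assert (Hlog : Rabs (delta n) <= Rabs C1 * / (e * - ln g) *
            (Rpower (ln (g * INR n)) (- e) - Rpower (ln (INR n)) (- e))).
  { eapply Rle_trans; [apply Hdelta; lia|].
    pose proof (Rpower_pos (ln (INR n)) (-1 - e)).
    pose proof (log_term_telescopes g e (INR n) Hg He Hgn).
    rewrite Rmult_assoc. eapply Rle_trans; [apply Rmult_le_compat_r; [lra | apply RRle_abs]|].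
    apply Rmult_le_compat_l; [apply Rabs_pos | lra]. }
  unfold error_term, log_potential.
  rewrite (power_term_telescopes g e (INR n) Hg He Hn0) at 1.
  rewrite (inverse_term_telescopes g (INR n) Hg Hn0) at 1.
  unfold A, B, C, Rdiv. nra.
Qed.

Lemma delta_vanishes (delta : nat -> R) C1 e N1 : 0 < e ->
  (forall n, (N1 <= n)%nat -> Rabs (delta n) <= C1 * Rpower (ln (INR n)) (-1 - e)) ->
  forall eta, 0 < eta -> exists N, forall n, (N <= n)%nat -> Rabs (delta n) <= eta.
Proof.
  intros He Hdelta eta Heta.
  assert (Hq : 0 < eta / (Rabs C1 + 1)) by (apply Rdiv_lt_0_compat; [| pose proof (Rabs_pos C1)]; lra).
  destruct (Rpower_neg_vanish (1 + e) _ ltac:(lra) Hq) as [X HXs].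
  destruct (nat_eventually_above (exp X)) as [N HN].
  exists (max N N1). intros n Hn.
  assert (Hl : X <= ln (INR n)).
  { rewrite <- (ln_exp X). apply ln_le_mono; [apply exp_pos | apply HN; lia]. }
  specialize (HXs _ Hl). replace (- (1 + e)) with (-1 - e) in HXs by ring.
  pose proof (Rpower_pos (ln (INR n)) (-1 - e)). pose proof (Rabs_pos C1).
  eapply Rle_trans; [apply Hdelta; lia|].
  apply Rle_trans with (Rabs C1 * Rpower (ln (INR n)) (-1 - e));
    [apply Rmult_le_compat_r; [lra | apply RRle_abs]|].
  apply Rle_trans with (Rabs C1 * (eta / (Rabs C1 + 1))); [apply Rmult_le_compat_l; lra|].
  apply Rmult_le_reg_r with (Rabs C1 + 1); [lra|].
  replace (Rabs C1 * (eta / (Rabs C1 + 1)) * (Rabs C1 + 1)) with (Rabs C1 * eta) by (field; lra).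
  nra.
Qed.

Lemma potential_induction (V : nat -> R) (Phi : R -> R) (g K : R) (n0 N1 : nat) :
  is_potential Phi -> 0 < g < 1 -> 2 <= INR n0 -> 1 <= K ->
  (forall n, (n0 <= n <= N1)%nat -> V n <= K) ->
  (forall n, (N1 < n)%nat -> INR n0 <= g * INR n) ->
  (forall n R, (N1 < n)%nat -> 1 <= R ->
     (forall j, (n0 <= j)%nat -> INR j <= g * INR n -> V j <= R) ->
     V n <= R * exp (Phi (g * INR n) - Phi (INR n))) ->
  forall n, (n0 <= n)%nat -> V n <= K * exp (Phi (INR n0) - Phi (INR n)).
Proof.
  intros [Hdecr _] Hg Hn0 HK Hsmall Hlarge Hstep.
  assert (Hgrow : forall x, 2 <= INR n0 <= x -> 1 <= exp (Phi (INR n0) - Phi x)).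
  { intros x Hx. pose proof (Hdecr (INR n0) x ltac:(lra) ltac:(lra)).
    pose proof (exp_ineq1_le (Phi (INR n0) - Phi x)). lra. }
  intros n. induction n as [n IH] using lt_wf_ind. intros Hn.
  assert (Hn2 : INR n0 <= INR n) by (apply le_INR; lia).
  destruct (Nat.le_gt_cases n N1) as [HnN|HnN].
  - pose proof (Hgrow (INR n) ltac:(lra)). pose proof (Hsmall n ltac:(lia)). nra.
  - pose proof (Hlarge n HnN) as Hgn.
    set (R := K * exp (Phi (INR n0) - Phi (g * INR n))).
    assert (HR : 1 <= R) by (pose proof (Hgrow (g * INR n) ltac:(lra)); unfold R; nra).
    eapply Rle_trans.
    + apply (Hstep n R HnN HR). intros j Hj Hjg.
      assert (Hjn : (j < n)%nat) by (apply INR_lt; nra).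
      eapply Rle_trans; [apply (IH j Hjn Hj)|]. unfold R.
      apply Rmult_le_compat_l; [lra|]. apply exp_le_mono.
      assert (INR n0 <= INR j) by (apply le_INR; lia).
      pose proof (Hdecr (INR j) (g * INR n) ltac:(lra) Hjg). lra.
    + unfold R. rewrite Rmult_assoc, <- exp_plus. right. f_equal. f_equal. ring.
Qed.

(** [visit_prob p a i n] is the probability [pi_i(n)] that the process started
    at [n] ever visits [i]: the limit of the nondecreasing sequence
    [visit_within p a i K n] as [K -> oo]. *)
Definition visit_prob (p : nat -> nat -> R) (a i n : nat) : R :=
  epsilon (inhabits 0) (fun l => Un_cv (fun K => visit_within p a i K n) l).

Section LeaderElection.
Variables (p : nat -> nat -> R) (a i : nat).
Hypothesis Hpmf : is_pmf_family p.

Let f := visit_prob p a i.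

Lemma visit_within_bounds K m : 0 <= visit_within p a i K m <= 1.
Proof.
  revert m. induction K as [|K IH]; intros m; simpl.
  - destruct (Nat.eqb m i); lra.
  - destruct (Nat.eqb m i); [lra|]. destruct (Nat.leb_spec m a); [lra|].
    destruct (Hpmf m ltac:(lia)) as [Hnn [_ [_ Htot]]].
    split.
    + apply cond_pos_sum. intros j. specialize (Hnn j). specialize (IH j). nra.
    + rewrite <- Htot. apply sum_Rle. intros j _. specialize (Hnn j). specialize (IH j). nra.
Qed.

Lemma visit_within_mono K m : visit_within p a i K m <= visit_within p a i (S K) m.
Proof.
  revert m. induction K as [|K IH]; intros m.
  - simpl. destruct (Nat.eqb m i); [lra|]. destruct (Nat.leb_spec m a); [lra|].
    destruct (Hpmf m ltac:(lia)) as [Hnn _].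
    apply cond_pos_sum. intros j. apply Rmult_le_pos; [apply Hnn | apply (visit_within_bounds 0 j)].
  - change (visit_within p a i (S K) m <= visit_within p a i (S (S K)) m).
    simpl. destruct (Nat.eqb m i); [lra|]. destruct (Nat.leb_spec m a); [lra|].
    destruct (Hpmf m ltac:(lia)) as [Hnn _].
    apply sum_Rle. intros j _. apply Rmult_le_compat_l; [apply Hnn | apply IH].
Qed.

Lemma visit_prob_cv n : Un_cv (fun K => visit_within p a i K n) (f n).
Proof.
  unfold f, visit_prob. apply epsilon_spec.
  destruct (growing_cv (fun K => visit_within p a i K n)) as [l Hl].
  - intros K. apply visit_within_mono.
  - exists 1. intros x [K ->]. apply visit_within_bounds.
  - exists l; exact Hl.
Qed.

Lemma visit_prob_bounds n : 0 <= f n <= 1.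
Proof.
  split.
  - apply (cv_ge_eventually _ _ 0 0 (visit_prob_cv n)). intros. apply visit_within_bounds.
  - apply (cv_le_eventually _ _ 1 0 (visit_prob_cv n)). intros. apply visit_within_bounds.
Qed.

(** Markov property: above the stopping level and away from [i], [pi_i] is
    harmonic for the transition kernel [p]. *)
Lemma visit_prob_harmonic m : (a < m)%nat -> m <> i ->
  f m = sum_f_R0 (fun j => p m j * f j) m.
Proof.
  intros Ham Hmi.
  assert (Hstep : forall K, visit_within p a i (S K) m
                            = sum_f_R0 (fun j => p m j * visit_within p a i K j) m).
  { intros K. simpl. destruct (Nat.eqb_spec m i); [lia|].
    destruct (Nat.leb_spec m a); [lia | reflexivity]. }
  apply (UL_sequence (fun K => visit_within p a i (S K) m)).
  - intros eps Heps. destruct (visit_prob_cv m eps Heps) as [N HN].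
    exists N. intros n Hn. apply HN. lia.
  - intros eps Heps.
    destruct (cv_finite_sum (p m) (fun K j => visit_within p a i K j) f m
                (fun j _ => visit_prob_cv j) eps Heps) as [N HN].
    exists N. intros n Hn. rewrite Hstep. apply HN; auto.
Qed.

Lemma cdf_bounds m j : (1 <= m)%nat -> 0 <= cdf p m j <= 1.
Proof.
  intros Hm. destruct (Hpmf m Hm) as [Hnn [_ [Hsupp Htot]]]. unfold cdf. split.
  - apply cond_pos_sum. auto.
  - rewrite <- Htot. destruct (Nat.le_gt_cases j m) as [Hjm|Hjm].
    + rewrite <- (sum_truncate (p m) j m Hjm). apply sum_Rle. intros k _.
      destruct (Nat.leb k j); [lra | apply Hnn].
    + rewrite <- (sum_truncate (p m) m j) by lia. right. apply sum_eq. intros k _.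
      destruct (Nat.leb_spec k m); [reflexivity | apply Hsupp; lia].
Qed.

Lemma pmf_mean_difference (h : nat -> R) n : (1 <= n)%nat ->
  sum_f_R0 (fun j => p (S n) j * h j) (S n) - sum_f_R0 (fun j => p n j * h j) n =
  sum_f_R0 (fun j => (cdf p n j - cdf p (S n) j) * (h (S j) - h j)) n.
Proof.
  intros Hn.
  destruct (Hpmf n Hn) as [_ [_ [Hsupp Htot]]].
  destruct (Hpmf (S n) ltac:(lia)) as [_ [_ [_ Htot']]].
  rewrite <- (Rplus_0_r (sum_f_R0 (fun j => p n j * h j) n)).
  rewrite <- (Rmult_0_l (h (S n))), <- (Hsupp (S n)) by lia.
  change (sum_f_R0 (fun j => p n j * h j) n + p n (S n) * h (S n))
    with (sum_f_R0 (fun j => p n j * h j) (S n)).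
  rewrite !abel_summation, (tech5 (p n) n), Hsupp, Htot, Htot' by lia.
  assert (Hw : sum_f_R0 (fun j => (cdf p n j - cdf p (S n) j) * (h (S j) - h j)) n =
               sum_f_R0 (fun j => cdf p n j * (h (S j) - h j)) n
               - sum_f_R0 (fun j => cdf p (S n) j * (h (S j) - h j)) n).
  { rewrite <- minus_sum. apply sum_eq. intros. ring. }
  rewrite Hw. unfold cdf. ring.
Qed.

Lemma mean_increment n : (1 <= n)%nat ->
  mean p (S n) - mean p n = sum_f_R0 (fun j => cdf p n j - cdf p (S n) j) n.
Proof.
  intros Hn. unfold mean.
  rewrite (sum_eq (fun j => INR j * p (S n) j) (fun j => p (S n) j * INR j)) by (intros; ring).
  rewrite (sum_eq (fun j => INR j * p n j) (fun j => p n j * INR j)) by (intros; ring).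
  rewrite pmf_mean_difference by auto. apply sum_eq. intros. rewrite S_INR. ring.
Qed.

Hypothesis Hmono : forall n k, (1 <= n)%nat -> (1 <= k)%nat -> cdf p n k >= cdf p (S n) k.

Lemma cdf_weight_nonneg n j : (1 <= n)%nat -> 0 <= cdf p n j - cdf p (S n) j.
Proof.
  intros Hn. destruct j as [|j].
  - destruct (Hpmf n Hn) as [_ [H0 _]]. destruct (Hpmf (S n) ltac:(lia)) as [_ [H0' _]].
    unfold cdf. simpl. rewrite H0, H0'. lra.
  - specialize (Hmono n (S j) Hn ltac:(lia)). lra.
Qed.

Variables (alpha : R) (delta : nat -> R).
Let dev := dev_prob p alpha delta.

Lemma dev_prob_nonneg m : (1 <= m)%nat -> 0 <= dev m.
Proof.
  intros Hm. destruct (Hpmf m Hm) as [Hnn _]. apply cond_pos_sum. intros k.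
  destruct (Rlt_dec _ _); [apply Hnn | lra].
Qed.

Lemma lower_tail n j : (1 <= n)%nat -> (j <= n)%nat ->
  INR j + delta n * INR n < alpha * INR n -> cdf p n j <= dev n.
Proof.
  intros Hn Hj Hlt. destruct (Hpmf n Hn) as [Hnn _].
  unfold cdf. rewrite <- (sum_truncate (p n) j n Hj). apply sum_Rle. intros k Hk.
  destruct (Nat.leb_spec k j) as [Hkj|Hkj].
  - destruct (Rlt_dec _ _) as [H|H]; [lra|]. exfalso. apply H.
    apply le_INR in Hkj. rewrite <- Rabs_Ropp. eapply Rlt_le_trans; [|apply Rle_abs]. lra.
  - destruct (Rlt_dec _ _); [apply Hnn | lra].
Qed.

Lemma upper_tail n j : (1 <= n)%nat -> (j <= n)%nat ->
  alpha * INR (S n) + delta (S n) * INR (S n) < INR (S j) -> 1 - cdf p (S n) j <= dev (S n).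
Proof.
  intros Hn Hj Hlt. destruct (Hpmf (S n) ltac:(lia)) as [Hnn [_ [_ Htot]]].
  unfold cdf. rewrite <- Htot, <- (sum_truncate (p (S n)) j (S n)), <- minus_sum by lia.
  apply sum_Rle. intros k Hk. destruct (Nat.leb_spec k j) as [Hkj|Hkj].
  - pose proof (Hnn k). destruct (Rlt_dec _ _); lra.
  - destruct (Rlt_dec _ _) as [H|H]; [lra|]. exfalso. apply H.
    assert (INR (S j) <= INR k) by (apply le_INR; lia).
    eapply Rlt_le_trans; [|apply Rle_abs]. lra.
Qed.

Definition increment (j : nat) : R := Rabs (f (S j) - f j).

Lemma increment_le1 j : increment j <= 1.
Proof.
  unfold increment. pose proof (visit_prob_bounds j). pose proof (visit_prob_bounds (S j)).
  apply Rabs_le. lra.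
Qed.

Lemma increment_recursion n G : (1 <= n)%nat -> (a < n)%nat -> n <> i -> S n <> i -> 0 <= G ->
  (forall j, (j <= n)%nat -> alpha * INR n <= INR j + delta n * INR n ->
       INR (S j) <= alpha * INR (S n) + delta (S n) * INR (S n) -> increment j <= G) ->
  increment n <= (mean p (S n) - mean p n) * G + INR (S n) * (dev n + dev (S n)).
Proof.
  intros Hn Han Hni HSni HG Htypical.
  assert (E : f (S n) - f n = sum_f_R0 (fun j => (cdf p n j - cdf p (S n) j) * (f (S j) - f j)) n).
  { rewrite <- pmf_mean_difference by auto. rewrite <- !visit_prob_harmonic by (auto; lia).
    reflexivity. }
  unfold increment at 1. rewrite E. eapply Rle_trans; [apply Rabs_triang_gen|].
  replace (INR (S n) * (dev n + dev (S n))) with (sum_f_R0 (fun _ => dev n + dev (S n)) n)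
    by (rewrite sum_cte; ring).
  rewrite mean_increment, (Rmult_comm _ G), scal_sum, <- plus_sum by auto.
  apply sum_Rle. intros j Hj.
  pose proof (cdf_weight_nonneg n j Hn) as Hw.
  rewrite Rabs_mult, (Rabs_pos_eq _ Hw). fold (increment j).
  pose proof (increment_le1 j). pose proof (Rabs_pos (f (S j) - f j)).
  pose proof (dev_prob_nonneg n Hn). pose proof (dev_prob_nonneg (S n) ltac:(lia)).
  pose proof (cdf_bounds n j Hn). pose proof (cdf_bounds (S n) j ltac:(lia)).
  fold (increment j) in *.
  destruct (Rlt_dec (INR j + delta n * INR n) (alpha * INR n)) as [Hl|Hl].
  - pose proof (lower_tail n j Hn Hj Hl). nra.
  - destruct (Rlt_dec (alpha * INR (S n) + delta (S n) * INR (S n)) (INR (S j))) as [Hh|Hh].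
    + pose proof (upper_tail n j Hn Hj Hh). nra.
    + assert (increment j <= G) by (apply Htypical; auto; lra). nra.
Qed.

Lemma harmonic_oscillation m r G : (a < m)%nat -> m <> i -> 0 <= G ->
  (forall j, (j <= m)%nat -> Rabs (INR j - alpha * INR m) <= delta m * INR m ->
      Rabs (f j - f r) <= G) ->
  Rabs (f m - f r) <= G + dev m.
Proof.
  intros Ham Hmi HG Htypical.
  destruct (Hpmf m ltac:(lia)) as [Hnn [_ [_ Htot]]].
  assert (E : f m - f r = sum_f_R0 (fun j => p m j * (f j - f r)) m).
  { rewrite (visit_prob_harmonic m) at 1 by auto.
    rewrite (sum_eq (fun j => p m j * (f j - f r)) (fun j => p m j * f j - p m j * f r))
      by (intros; ring).
    rewrite minus_sum, <- scal_sum, Htot. ring. }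
  rewrite E. eapply Rle_trans; [apply Rabs_triang_gen|].
  rewrite <- (Rmult_1_r G), <- Htot, scal_sum. unfold dev, dev_prob. rewrite <- plus_sum.
  apply sum_Rle. intros j Hj.
  rewrite Rabs_mult, (Rabs_pos_eq _ (Hnn j)).
  pose proof (Hnn j). pose proof (visit_prob_bounds j). pose proof (visit_prob_bounds r).
  assert (Rabs (f j - f r) <= 1) by (apply Rabs_le; lra).
  pose proof (Rabs_pos (f j - f r)).
  destruct (Rlt_dec _ _) as [Hb|Hb].
  - nra.
  - assert (Rabs (f j - f r) <= G) by (apply Htypical; auto; lra). nra.
Qed.

End LeaderElection.

Lemma increments_lipschitz (f : nat -> R) L n0 : 0 <= L -> (1 <= n0)%nat ->
  (forall n, (n0 <= n)%nat -> Rabs (f (S n) - f n) <= L / INR n) ->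
  forall u v M, (n0 <= u)%nat -> (n0 <= v)%nat -> 0 < M -> M <= INR u -> M <= INR v ->
  Rabs (f u - f v) <= L * Rabs (INR u - INR v) / M.
Proof.
  intros HL Hn0 Hinc.
  assert (Hchain : forall u v, (n0 <= u)%nat -> (u <= v)%nat ->
                   Rabs (f v - f u) <= L * (INR v - INR u) / INR u).
  { intros u v Hu Huv.
    assert (Hu0 : 0 < INR u) by (apply lt_0_INR; lia).
    induction Huv as [|v Huv IH].
    - rewrite Rminus_diag, Rabs_R0. unfold Rdiv. rewrite Rminus_diag. lra.
    - replace (f (S v) - f u) with ((f (S v) - f v) + (f v - f u)) by ring.
      eapply Rle_trans; [apply Rabs_triang|].
      assert (L / INR v <= L / INR u).
      { unfold Rdiv. apply Rmult_le_compat_l; auto.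
        apply Rinv_le_contravar; auto. apply le_INR; auto. }
      pose proof (Hinc v ltac:(lia)).
      replace (L * (INR (S v) - INR u) / INR u) with (L * (INR v - INR u) / INR u + L / INR u)
        by (rewrite S_INR; field; lra).
      lra. }
  intros u v M Hu Hv HM HMu HMv.
  destruct (Nat.le_ge_cases u v) as [H|H].
  - rewrite Rabs_minus_sym, (Rabs_minus_sym (INR u)).
    eapply Rle_trans; [apply (Hchain u v Hu H)|].
    assert (INR u <= INR v) by (apply le_INR; auto).
    rewrite Rabs_pos_eq by lra. unfold Rdiv. apply Rmult_le_compat_l; [nra|].
    apply Rinv_le_contravar; auto.
  - eapply Rle_trans; [apply (Hchain v u Hv H)|].
    assert (INR v <= INR u) by (apply le_INR; auto).
    rewrite Rabs_pos_eq by lra. unfold Rdiv. apply Rmult_le_compat_l; [nra|].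
    apply Rinv_le_contravar; auto.
Qed.

Lemma ratio_perturbation alpha C x : 0 < alpha -> 0 <= C -> 0 <= x <= alpha / 2 ->
  (alpha + C * x) / (alpha - x) <= 1 + 2 * (C + 1) / alpha * x.
Proof.
  intros Ha HC Hx.
  apply Rmult_le_reg_r with (alpha - x); [lra|].
  unfold Rdiv at 1. rewrite Rmult_assoc, Rinv_l, Rmult_1_r by lra.
  replace ((1 + 2 * (C + 1) / alpha * x) * (alpha - x))
    with (alpha + C * x + (C + 1) * x * (1 - 2 * x / alpha)) by (field; lra).
  assert (2 * x / alpha <= 1).
  { apply Rmult_le_reg_r with alpha; [lra|].
    unfold Rdiv. rewrite Rmult_assoc, Rinv_l; lra. }
  assert (0 <= (C + 1) * x * (1 - 2 * x / alpha)) by (apply Rmult_le_pos; nra).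
  lra.
Qed.

Lemma typical_window alpha d0 d1 n j : 0 < alpha < 1 -> Rabs d1 <= (1 - alpha) / 4 ->
  alpha * INR n <= INR j + d0 * INR n ->
  INR (S j) <= alpha * INR (S n) + d1 * INR (S n) ->
  INR n * (alpha - Rabs d0) <= INR j /\ INR j <= (1 + alpha) / 2 * INR n.
Proof.
  intros Halpha Hd1 Hlow Hhigh. rewrite !S_INR in Hhigh. pose proof (pos_INR n).
  assert (d0 * INR n <= Rabs d0 * INR n) by (apply Rmult_le_compat_r; [lra | apply RRle_abs]).
  assert (d1 * (INR n + 1) <= (1 - alpha) / 4 * (INR n + 1))
    by (apply Rmult_le_compat_r; [lra | eapply Rle_trans; [apply RRle_abs | exact Hd1]]).
  split; nra.
Qed.

Lemma growth_factor_bound V R x r y c1 c3 : 1 <= R -> 0 <= x -> 0 <= r -> 0 <= y ->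
  0 <= c1 -> 0 <= c3 -> V <= (R - 1) * (1 + c1 * x) + c3 * r + 1 ->
  V <= R * (1 + (c1 + c3) * (x + r + y)).
Proof.
  intros HR Hx Hr Hy Hc1 Hc3 HV.
  assert (0 <= R * c1 * (r + y)) by (apply Rmult_le_pos; nra).
  assert (0 <= R * c3 * (x + y)) by (apply Rmult_le_pos; nra).
  assert (0 <= c1 * x) by nra.
  assert (0 <= c3 * r * (R - 1)) by (apply Rmult_le_pos; nra).
  nra.
Qed.

Section Estimates.
Variables (p : nat -> nat -> R) (alpha : R) (a i : nat) (delta : nat -> R)
  (e C1 C2 C3 : R) (N1 N2 N3 : nat).
Hypothesis Hpmf : is_pmf_family p.
Hypothesis Hmono : forall n k, (1 <= n)%nat -> (1 <= k)%nat -> cdf p n k >= cdf p (S n) k.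
Hypothesis Halpha : 0 < alpha < 1.
Hypothesis He : 0 < e.
Hypothesis HC1 : forall n, (N1 <= n)%nat -> Rabs (delta n) <= C1 * Rpower (ln (INR n)) (-1 - e).
Hypothesis HC2 : forall n, (N2 <= n)%nat -> Rabs (mean p (S n) - mean p n - alpha) <= C2 * Rabs (delta n).
Hypothesis HC3 : forall n, (N3 <= n)%nat -> dev_prob p alpha delta n <= C3 * Rpower (INR n) (-2 - e).

Let f := visit_prob p a i.
Let D := increment p a i.
Let dev := dev_prob p alpha delta.
Let g := (1 + alpha) / 2.

Lemma dev_prob_quadratic n : (max N3 1 <= n)%nat ->
  INR n * INR n * dev n <= Rabs C3 * Rpower (INR n) (- e).
Proof.
  intros Hn. assert (Hn1 : 1 <= INR n) by (apply (le_INR 1); lia).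
  pose proof (HC3 n ltac:(lia)) as Hd. rewrite Rpower_minus2 in Hd by lra.
  pose proof (Rpower_pos (INR n) (- e)). pose proof (RRle_abs C3).
  apply Rmult_le_compat_l with (r := INR n * INR n) in Hd; [|nra].
  replace (INR n * INR n * (C3 * (Rpower (INR n) (- e) / (INR n * INR n))))
    with (C3 * Rpower (INR n) (- e)) in Hd by (field; lra).
  fold dev in Hd. nra.
Qed.

Lemma dev_prob_decay m : (max N3 1 <= m)%nat -> dev m <= Rabs C3 * Rpower (INR m) (- e).
Proof.
  intros Hm. assert (Hm1 : 1 <= INR m) by (apply (le_INR 1); lia).
  pose proof (dev_prob_quadratic m Hm).
  pose proof (dev_prob_nonneg p Hpmf alpha delta m ltac:(lia)) as Hd0. fold dev in Hd0.
  assert (dev m <= INR m * INR m * dev m)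
    by (rewrite <- (Rmult_1_l (dev m)) at 1; apply Rmult_le_compat_r; nra).
  lra.
Qed.

Lemma dev_prob_pair n : (max N3 1 <= n)%nat ->
  INR n * INR (S n) * (dev n + dev (S n)) <= 3 * Rabs C3 * Rpower (INR n) (- e).
Proof.
  intros Hn. assert (Hn1 : 1 <= INR n) by (apply (le_INR 1); lia).
  pose proof (dev_prob_quadratic n Hn) as H0.
  pose proof (dev_prob_quadratic (S n) ltac:(lia)) as H1.
  rewrite S_INR in H1 |- *.
  pose proof (Rpower_neg_antimono (INR n) (INR n + 1) e ltac:(lra) ltac:(lra) ltac:(lra)).
  pose proof (dev_prob_nonneg p Hpmf alpha delta n ltac:(lia)) as Hd0.
  pose proof (dev_prob_nonneg p Hpmf alpha delta (S n) ltac:(lia)) as Hd1.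
  pose proof (Rabs_pos C3). fold dev in Hd0, Hd1.
  assert (Hq0 : INR n * (INR n + 1) * dev n <= 2 * (INR n * INR n * dev n)).
  { assert (0 <= (INR n - 1) * dev n) by (apply Rmult_le_pos; lra). nra. }
  assert (Hq1 : INR n * (INR n + 1) * dev (S n) <= (INR n + 1) * (INR n + 1) * dev (S n)).
  { assert (0 <= (INR n + 1) * dev (S n)) by (apply Rmult_le_pos; lra). nra. }
  assert (Rabs C3 * Rpower (INR n + 1) (- e) <= Rabs C3 * Rpower (INR n) (- e))
    by (apply Rmult_le_compat_l; lra).
  lra.
Qed.

Lemma increment_step : exists c N, 0 <= c /\
  forall n R, (N <= n)%nat -> 1 <= R ->
    (forall j, alpha * INR n / 2 <= INR j -> INR j <= g * INR n -> INR j * D j + 1 <= R) ->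
    INR n * D n + 1 <= R * (1 + c * error_term delta e n).
Proof.
  set (eta := Rmin (alpha / 2) ((1 - alpha) / 4)).
  assert (Heta : 0 < eta) by (apply Rmin_pos; lra).
  assert (Heta1 : eta <= alpha / 2) by apply Rmin_l.
  assert (Heta2 : eta <= (1 - alpha) / 4) by apply Rmin_r.
  destruct (delta_vanishes delta C1 e N1 He HC1 eta Heta) as [Ne HNe].
  set (c1 := 2 * (Rabs C2 + 1) / alpha).
  assert (Hc1 : 0 <= c1) by (unfold c1; pose proof (Rabs_pos C2);
                             apply Rmult_le_pos; [lra | left; apply Rinv_0_lt_compat; lra]).
  exists (c1 + 3 * Rabs C3), (max (max Ne N2) (max (max N3 1) (S (max a i)))).
  split; [pose proof (Rabs_pos C3); lra|].
  intros n R Hn HR Htypical.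
  assert (Hn1 : 1 <= INR n) by (apply (le_INR 1); lia).
  set (x := Rabs (delta n)).
  assert (Hx : 0 <= x <= eta) by (split; [apply Rabs_pos | apply HNe; lia]).
  set (G := (R - 1) / (INR n * (alpha - x))).
  assert (Hnx : 0 < INR n * (alpha - x)) by (apply Rmult_lt_0_compat; lra).
  assert (HG : 0 <= G) by (apply Rmult_le_pos; [lra | left; apply Rinv_0_lt_compat; lra]).
  assert (Hrec : D n <= (mean p (S n) - mean p n) * G + INR (S n) * (dev n + dev (S n))).
  { apply (increment_recursion p a i Hpmf Hmono alpha delta n G); try lia; auto.
    intros j _ Hlow Hhigh.
    destruct (typical_window alpha (delta n) (delta (S n)) n j Halpha
                ltac:(pose proof (HNe (S n) ltac:(lia)); lra) Hlow Hhigh) as [Hjlow Hjhigh].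
    fold x in Hjlow.
    assert (HVj := Htypical j ltac:(nra) Hjhigh).
    assert (HDj : 0 <= D j) by apply Rabs_pos.
    unfold G. apply Rmult_le_reg_r with (INR n * (alpha - x)); [lra|].
    unfold Rdiv. rewrite Rmult_assoc, Rinv_l by lra.
    assert (D j * (INR n * (alpha - x)) <= D j * INR j) by (apply Rmult_le_compat_l; lra).
    change (D j * (INR n * (alpha - x)) <= (R - 1) * 1). lra. }
  assert (Hmean : mean p (S n) - mean p n <= alpha + Rabs C2 * x).
  { pose proof (HC2 n ltac:(lia)) as Hm. pose proof (RRle_abs (mean p (S n) - mean p n - alpha)).
    pose proof (RRle_abs C2). fold x in Hm.
    assert (C2 * x <= Rabs C2 * x) by (apply Rmult_le_compat_r; lra). lra. }
  assert (Hratio : INR n * ((alpha + Rabs C2 * x) * G) <= (R - 1) * (1 + c1 * x)).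
  { replace (INR n * ((alpha + Rabs C2 * x) * G))
      with ((R - 1) * ((alpha + Rabs C2 * x) / (alpha - x))) by (unfold G; field; lra).
    apply Rmult_le_compat_l; [lra|]. apply ratio_perturbation; [lra | apply Rabs_pos | lra]. }
  pose proof (dev_prob_pair n ltac:(lia)) as Hpair. fold dev in Hpair.
  apply Rmult_le_compat_l with (r := INR n) in Hrec; [|lra].
  assert (INR n * ((mean p (S n) - mean p n) * G) <= INR n * ((alpha + Rabs C2 * x) * G))
    by (apply Rmult_le_compat_l; [lra | apply Rmult_le_compat_r; auto]).
  rewrite Rmult_plus_distr_l, <- (Rmult_assoc (INR n) (INR (S n))) in Hrec.
  unfold error_term. fold x.
  pose proof (Rpower_pos (INR n) (- e)). pose proof (Rabs_pos C3).
  assert (0 <= / INR n) by (left; apply Rinv_0_lt_compat; lra).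
  apply growth_factor_bound with (c3 := 3 * Rabs C3); lra.
Qed.

Lemma increment_decay : exists L n0, 0 <= L /\ (1 <= n0)%nat /\
  forall n, (n0 <= n)%nat -> D n <= L / INR n.
Proof.
  destruct increment_step as [c [N [Hc Hstep]]].
  assert (Hg : 0 < g < 1) by (unfold g; lra).
  destruct (error_term_below_potential g e C1 c N1 delta Hg He Hc HC1)
    as [Phi [NP [HPhi Hpot]]].
  set (n0 := max (max N NP) 2).
  assert (Hn02 : 2 <= INR n0) by (apply (le_INR 2); lia).
  destruct (nat_eventually_above (2 * INR n0 / alpha)) as [Nb HNb].
  set (N1' := max Nb n0).
  set (K := INR N1' + 1).
  assert (HK : 1 <= K) by (unfold K; pose proof (pos_INR N1'); lra).
  assert (Hfar : forall n, (N1' < n)%nat -> INR n0 <= alpha * INR n / 2).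
  { intros n Hn. assert (Hb : 2 * INR n0 / alpha <= INR n) by (apply HNb; lia).
    apply Rmult_le_compat_l with (r := alpha / 2) in Hb; [|lra].
    replace (alpha / 2 * (2 * INR n0 / alpha)) with (INR n0) in Hb by (field; lra). lra. }
  assert (Hgrowth : forall n, (n0 <= n)%nat ->
            INR n * D n + 1 <= K * exp (Phi (INR n0) - Phi (INR n))).
  { apply (potential_induction (fun n => INR n * D n + 1) Phi g K n0 N1'); auto.
    - intros n Hn. pose proof (increment_le1 p a i Hpmf n) as HD1. pose proof (pos_INR n).
      assert (INR n <= INR N1') by (apply le_INR; lia).
      fold D in HD1. unfold K. nra.
    - intros n Hn. pose proof (Hfar n Hn). pose proof (pos_INR n). unfold g. nra.
    - intros n R Hn HR Hprev.
      eapply Rle_trans; [apply (Hstep n R); [lia | exact HR|]|].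
      + intros j Hj1 Hj2. apply Hprev; [|exact Hj2].
        apply INR_le. pose proof (Hfar n Hn). lra.
      + apply Rmult_le_compat_l; [lra|].
        eapply Rle_trans; [|apply exp_le_mono, (Hpot n ltac:(lia))].
        apply exp_ineq1_le. }
  destruct HPhi as [_ [HPhi0 _]].
  exists (K * exp (Phi (INR n0))), n0.
  split; [pose proof (exp_pos (Phi (INR n0))); nra|]. split; [lia|].
  intros n Hn. specialize (Hgrowth n Hn).
  assert (Hn2 : 2 <= INR n) by (apply Rle_trans with (INR n0); [lra | apply le_INR; lia]).
  assert (exp (Phi (INR n0) - Phi (INR n)) <= exp (Phi (INR n0)))
    by (apply exp_le_mono; pose proof (HPhi0 (INR n) Hn2); lra).
  apply Rmult_le_reg_l with (INR n); [lra|].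
  replace (INR n * (K * exp (Phi (INR n0)) / INR n)) with (K * exp (Phi (INR n0))) by (field; lra).
  nra.
Qed.

Lemma visit_prob_lipschitz : exists L n0, 0 <= L /\ (1 <= n0)%nat /\
  forall u v M, (n0 <= u)%nat -> (n0 <= v)%nat -> 0 < M -> M <= INR u -> M <= INR v ->
    Rabs (f u - f v) <= L * Rabs (INR u - INR v) / M.
Proof.
  destruct increment_decay as [L [n0 [HL [Hn0 Hdecay]]]].
  exists L, n0. split; [exact HL|]. split; [exact Hn0|].
  exact (increments_lipschitz f L n0 HL Hn0 Hdecay).
Qed.

Lemma visit_prob_scale_step : exists c Ms, 0 <= c /\
  forall m r, (Ms <= m)%nat -> Rabs (INR r - alpha * INR m) <= 1 ->
    Rabs (f m - f r) <= c * error_term delta e m.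
Proof.
  destruct visit_prob_lipschitz as [L [n0 [HL [Hn0 Hlip]]]].
  destruct (delta_vanishes delta C1 e N1 He HC1 (alpha / 4) ltac:(lra)) as [Ne HNe].
  destruct (nat_eventually_above (4 * (INR n0 + 1) / alpha)) as [Nm HNm].
  assert (H4L : 0 <= 4 * L / alpha) by (apply Rmult_le_pos; [lra | left; apply Rinv_0_lt_compat; lra]).
  exists (4 * L / alpha + Rabs C3), (max (max Ne Nm) (max (max N3 1) (S (max a i)))).
  split; [pose proof (Rabs_pos C3); lra|].
  intros m r Hm Hr.
  assert (Hm1 : 1 <= INR m) by (apply (le_INR 1); lia).
  set (x := Rabs (delta m)).
  assert (Hx : 0 <= x <= alpha / 4) by (split; [apply Rabs_pos | apply HNe; lia]).
  set (M := alpha * INR m / 4).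
  assert (HM : INR n0 + 1 <= M).
  { assert (Hb : 4 * (INR n0 + 1) / alpha <= INR m) by (apply HNm; lia).
    apply Rmult_le_compat_l with (r := alpha / 4) in Hb; [|lra].
    replace (alpha / 4 * (4 * (INR n0 + 1) / alpha)) with (INR n0 + 1) in Hb by (field; lra).
    unfold M. lra. }
  assert (Hn01 : 1 <= INR n0) by (apply (le_INR 1); lia).
  set (G := L * (x * INR m + 1) / M).
  assert (HG : 0 <= G).
  { apply Rmult_le_pos; [apply Rmult_le_pos; nra | left; apply Rinv_0_lt_compat; lra]. }
  pose proof (Rabs_le_bounds _ _ Hr) as Hr'.
  assert (HrM : M <= INR r) by (unfold M in *; lra).
  assert (Hosc : Rabs (f m - f r) <= G + dev m).
  { apply (harmonic_oscillation p a i Hpmf alpha delta m r G); [lia | lia | exact HG|].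
    intros j Hj Hjtyp.
    assert (Hdm : delta m * INR m <= x * INR m)
      by (apply Rmult_le_compat_r; [lra | apply RRle_abs]).
    pose proof (Rabs_le_bounds _ _ Hjtyp).
    assert (HjM : M <= INR j) by (unfold M in *; nra).
    eapply Rle_trans; [apply (Hlip j r M); try (apply INR_le; lra); lra|].
    unfold G, Rdiv. apply Rmult_le_compat_r; [left; apply Rinv_0_lt_compat; lra|].
    apply Rmult_le_compat_l; [exact HL|]. apply Rabs_le. lra. }
  pose proof (dev_prob_decay m ltac:(lia)) as Hdev.
  assert (HGe : G = 4 * L / alpha * (x + / INR m)) by (unfold G, M; field; lra).
  unfold error_term. fold x.
  pose proof (Rpower_pos (INR m) (- e)). pose proof (Rabs_pos C3).
  assert (0 < / INR m) by (apply Rinv_0_lt_compat; lra).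
  assert (0 <= 4 * L / alpha * Rpower (INR m) (- e)) by nra.
  assert (0 <= Rabs C3 * (x + / INR m)) by nra.
  rewrite HGe in Hosc. nra.
Qed.

Lemma visit_prob_potential_step : exists Phi Ms, is_potential Phi /\
  forall m r, (Ms <= m)%nat -> Rabs (INR r - alpha * INR m) <= 1 ->
    Rabs (f m - f r) <= Phi (g * INR m) - Phi (INR m).
Proof.
  destruct visit_prob_scale_step as [c [Ms [Hc Hscale]]].
  destruct (error_term_below_potential g e C1 c N1 delta ltac:(unfold g; lra) He Hc HC1)
    as [Phi [NP [HPhi Hpot]]].
  exists Phi, (max Ms NP). split; [exact HPhi|].
  intros m r Hm Hr. eapply Rle_trans; [apply Hscale; [lia | exact Hr]|]. apply Hpot. lia.
Qed.

End Estimates.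

Section ScalingLimit.
Variables (f : nat -> R) (alpha g : R) (Phi : R -> R) (L : R) (n0 Ms : nat).
Hypothesis Halpha : 0 < alpha.
Hypothesis Hg : alpha < g < 1.
Hypothesis HPhi : is_potential Phi.
Hypothesis HL : 0 <= L.
Hypothesis Hn0 : (1 <= n0)%nat.
Hypothesis Hlip : forall u v M, (n0 <= u)%nat -> (n0 <= v)%nat -> 0 < M ->
  M <= INR u -> M <= INR v -> Rabs (f u - f v) <= L * Rabs (INR u - INR v) / M.
Hypothesis Hstep : forall m r, (Ms <= m)%nat -> Rabs (INR r - alpha * INR m) <= 1 ->
  Rabs (f m - f r) <= Phi (g * INR m) - Phi (INR m).

Let b := / alpha.

Lemma scale_gt1 : 1 < b.
Proof. unfold b. rewrite <- Rinv_1. apply Rinv_lt_contravar; lra. Qed.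

Lemma scale_pow_pos k : 0 < b ^ k.
Proof. apply pow_lt. pose proof scale_gt1. lra. Qed.

Definition sample (t : R) (k : nat) : nat := floor_nat (t * b ^ k).

Lemma sample_spec t k : 0 < t -> INR (sample t k) <= t * b ^ k < INR (sample t k) + 1.
Proof. intros Ht. apply floor_nat_spec. pose proof (scale_pow_pos k). nra. Qed.

Lemma sample_mono t k k' : 0 < t -> (k <= k')%nat -> (sample t k <= sample t k')%nat.
Proof.
  intros Ht Hk. apply floor_nat_mono; [pose proof (scale_pow_pos k); nra|].
  apply Rmult_le_compat_l; [lra|]. apply Rle_pow; [pose proof scale_gt1; lra | exact Hk].
Qed.

Lemma sample_rescale t k : 0 < t -> Rabs (INR (sample t k) - alpha * INR (sample t (S k))) <= 1.
Proof.
  intros Ht. destruct (sample_spec t k Ht). destruct (sample_spec t (S k) Ht).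
  assert (E : alpha * (t * b ^ S k) = t * b ^ k) by (simpl; unfold b; field; lra).
  assert (alpha * INR (sample t (S k)) <= t * b ^ k) by (rewrite <- E; apply Rmult_le_compat_l; lra).
  assert (t * b ^ k < alpha * INR (sample t (S k)) + alpha) by (rewrite <- E; nra).
  apply Rabs_le. lra.
Qed.

(** Sampling [alpha t] one step later is sampling [t]: the source of periodicity. *)
Lemma sample_shift t k : sample (alpha * t) (S k) = sample t k.
Proof. unfold sample. f_equal. simpl. unfold b. field. lra. Qed.

Lemma sample_unbounded t X : 0 < t -> exists k, forall k', (k <= k')%nat -> X <= INR (sample t k').
Proof.
  intros Ht. destruct (pow_eventually_above b ((X + 1) / t) scale_gt1) as [k Hk].
  exists k. intros k' Hk'. specialize (Hk k' Hk'). destruct (sample_spec t k' Ht).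
  apply Rmult_le_compat_l with (r := t) in Hk; [|lra].
  replace (t * ((X + 1) / t)) with (X + 1) in Hk by (field; lra). lra.
Qed.

(** Points beyond which [Hstep] applies and the samples grow by a factor [1 / g]. *)
Definition large (x : R) : Prop :=
  INR Ms <= x /\ 2 <= g * x /\ g / alpha <= (g / alpha - 1) * x.

Lemma ratio_gt1 : 1 < g / alpha.
Proof.
  apply Rmult_lt_reg_r with alpha; [lra|].
  unfold Rdiv. rewrite Rmult_assoc, Rinv_l by lra. lra.
Qed.

Lemma large_mono x y : large x -> x <= y -> large y.
Proof.
  intros [H1 [H2 H3]] Hxy. pose proof ratio_gt1. split; [lra|]. split; nra.
Qed.

Lemma large_eventually : exists X, forall x, X <= x -> large x.
Proof.
  pose proof ratio_gt1 as Hr.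
  exists (INR Ms + 2 / g + (g / alpha) / (g / alpha - 1)).
  assert (H1 : 0 <= 2 / g) by (apply Rmult_le_pos; [lra | left; apply Rinv_0_lt_compat; lra]).
  assert (H2 : 0 <= (g / alpha) / (g / alpha - 1))
    by (apply Rmult_le_pos; [lra | left; apply Rinv_0_lt_compat; lra]).
  pose proof (pos_INR Ms).
  intros x Hx. split; [lra|]. split.
  - apply Rmult_le_reg_l with (/ g); [apply Rinv_0_lt_compat; lra|].
    rewrite <- Rmult_assoc, Rinv_l, Rmult_1_l by lra. unfold Rdiv in H1. lra.
  - apply Rmult_le_reg_l with (/ (g / alpha - 1)); [apply Rinv_0_lt_compat; lra|].
    rewrite <- Rmult_assoc, Rinv_l, Rmult_1_l by lra.
    replace (/ (g / alpha - 1) * (g / alpha)) with ((g / alpha) / (g / alpha - 1))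
      by (unfold Rdiv; ring).
    lra.
Qed.

Lemma sample_next t k : 0 < t -> large (INR (sample t k)) ->
  INR (sample t k) <= g * INR (sample t (S k)).
Proof.
  intros Ht [_ [_ Hx]]. pose proof (Rabs_le_bounds _ _ (sample_rescale t k Ht)) as Hr.
  pose proof ratio_gt1.
  assert (g / alpha * (INR (sample t k) - 1) <= g / alpha * (alpha * INR (sample t (S k))))
    by (apply Rmult_le_compat_l; lra).
  replace (g / alpha * (alpha * INR (sample t (S k)))) with (g * INR (sample t (S k))) in H0
    by (field; lra).
  lra.
Qed.

Lemma sample_chain t k : 0 < t -> large (INR (sample t (S k))) -> forall m, (k <= m)%nat ->
  Rabs (f (sample t m) - f (sample t k))
    <= Phi (g * INR (sample t (S k))) - Phi (g * INR (sample t (S m))).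
Proof.
  destruct HPhi as [Hdecr _].
  intros Ht Hk m Hm. induction Hm as [|m Hm IH].
  - rewrite !Rminus_diag, Rabs_R0. lra.
  - assert (HSm : large (INR (sample t (S m))))
      by (eapply large_mono; [exact Hk | apply le_INR, sample_mono; [exact Ht | lia]]).
    pose proof HSm as [HMs [H2 _]].
    assert (Hs : Rabs (f (sample t (S m)) - f (sample t m))
                 <= Phi (g * INR (sample t (S m))) - Phi (INR (sample t (S m)))).
    { apply Hstep; [apply INR_le; lra|].
      rewrite <- Rabs_Ropp. replace (- _) with (alpha * INR (sample t (S m)) - INR (sample t m))
        by ring.
      rewrite Rabs_minus_sym. apply sample_rescale; exact Ht. }
    assert (Hgrow := sample_next t (S m) Ht HSm).
    assert (Phi (g * INR (sample t (S (S m)))) <= Phi (INR (sample t (S m))))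
      by (apply Hdecr; [nra | exact Hgrow]).
    replace (f (sample t (S m)) - f (sample t k))
      with ((f (sample t (S m)) - f (sample t m)) + (f (sample t m) - f (sample t k))) by ring.
    eapply Rle_trans; [apply Rabs_triang|]. lra.
Qed.

Lemma sample_tail t k : 0 < t -> large (INR (sample t (S k))) -> forall m, (k <= m)%nat ->
  Rabs (f (sample t m) - f (sample t k)) <= Phi (g * INR (sample t (S k))).
Proof.
  destruct HPhi as [_ [Hnonneg _]].
  intros Ht Hk m Hm. eapply Rle_trans; [apply sample_chain; eauto|].
  assert (HSm : large (INR (sample t (S m))))
    by (eapply large_mono; [exact Hk | apply le_INR, sample_mono; [exact Ht | lia]]).
  pose proof HSm as [_ [H2 _]]. pose proof (Hnonneg _ H2). lra.
Qed.

Lemma sample_eventually_large t X : 0 < t ->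
  exists k, forall k', (k <= k')%nat -> large (INR (sample t k')) /\ X <= INR (sample t k').
Proof.
  intros Ht. destruct large_eventually as [X0 HX0].
  destruct (sample_unbounded t (Rmax X0 X) Ht) as [k Hk]. exists k. intros k' Hk'.
  pose proof (Hk k' Hk'). pose proof (Rmax_l X0 X). pose proof (Rmax_r X0 X).
  split; [apply HX0|]; lra.
Qed.

(** Since [Phi] vanishes at infinity, the sampled values form a Cauchy sequence. *)
Lemma sample_cauchy t : 0 < t -> Cauchy_crit (fun k => f (sample t k)).
Proof.
  destruct HPhi as [_ [_ Hvanish]].
  intros Ht eps Heps.
  destruct (Hvanish (eps / 4) ltac:(lra)) as [Xe [_ HXe]].
  destruct (sample_eventually_large t (Xe / g) Ht) as [k Hk].
  exists k. intros m m' Hm Hm'.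
  destruct (Hk (S k) ltac:(lia)) as [Hlarge Hfar].
  assert (HgX : Xe <= g * INR (sample t (S k))).
  { apply Rmult_le_compat_l with (r := g) in Hfar; [|lra].
    replace (g * (Xe / g)) with Xe in Hfar by (field; lra). exact Hfar. }
  pose proof (HXe _ HgX).
  pose proof (sample_tail t k Ht Hlarge m Hm). pose proof (sample_tail t k Ht Hlarge m' Hm').
  unfold Rdist.
  replace (f (sample t m) - f (sample t m'))
    with ((f (sample t m) - f (sample t k)) - (f (sample t m') - f (sample t k))) by ring.
  eapply Rle_lt_trans; [apply Rabs_triang|]. rewrite Rabs_Ropp. lra.
Qed.

Definition psi (t : R) : R := epsilon (inhabits 0) (fun l => Un_cv (fun k => f (sample t k)) l).

Lemma psi_cv t : 0 < t -> Un_cv (fun k => f (sample t k)) (psi t).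
Proof.
  intros Ht. unfold psi. apply epsilon_spec.
  destruct (R_complete _ (sample_cauchy t Ht)) as [l Hl]. exists l. exact Hl.
Qed.

Lemma psi_close t k : 0 < t -> large (INR (sample t (S k))) ->
  Rabs (psi t - f (sample t k)) <= Phi (g * INR (sample t (S k))).
Proof.
  intros Ht Hk. pose proof (sample_tail t k Ht Hk) as Htail. apply Rabs_le. split.
  - assert (f (sample t k) - Phi (g * INR (sample t (S k))) <= psi t); [|lra].
    apply (cv_ge_eventually _ _ _ k (psi_cv t Ht)). intros m Hm.
    pose proof (Rabs_le_bounds _ _ (Htail m Hm)). lra.
  - assert (psi t <= f (sample t k) + Phi (g * INR (sample t (S k)))); [|lra].
    apply (cv_le_eventually _ _ _ k (psi_cv t Ht)). intros m Hm.
    pose proof (Rabs_le_bounds _ _ (Htail m Hm)). lra.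
Qed.

Lemma psi_periodic t : 0 < t -> psi (alpha * t) = psi t.
Proof.
  intros Ht. apply (UL_sequence (fun k => f (sample t k))); [|apply psi_cv; exact Ht].
  intros eps Heps. destruct (psi_cv (alpha * t) ltac:(nra) eps Heps) as [N HN].
  exists N. intros n Hn. rewrite <- sample_shift. apply HN. lia.
Qed.

Lemma psi_approximates : Un_cv (fun n => f n - psi (INR n)) 0.
Proof.
  destruct HPhi as [_ [_ Hvanish]].
  intros eps Heps.
  destruct (Hvanish (eps / 2) ltac:(lra)) as [Xe [HXe2 HXe]].
  destruct large_eventually as [X HX].
  destruct (nat_eventually_above (Rmax (Rmax X (Xe / g)) 1)) as [N HN].
  exists N. intros n Hn. specialize (HN n Hn).
  pose proof (Rmax_l (Rmax X (Xe / g)) 1). pose proof (Rmax_r (Rmax X (Xe / g)) 1).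
  pose proof (Rmax_l X (Xe / g)). pose proof (Rmax_r X (Xe / g)).
  assert (Ht : 0 < INR n) by lra.
  assert (Hb : INR n <= INR (sample (INR n) 1)).
  { apply le_INR. rewrite <- (floor_nat_INR n) at 1. apply floor_nat_mono; [lra|].
    simpl. rewrite Rmult_1_r. pose proof scale_gt1. nra. }
  assert (Hlarge : large (INR (sample (INR n) 1))) by (apply HX; lra).
  assert (HgX : Xe <= g * INR (sample (INR n) 1)).
  { assert (Hfar : Xe / g <= INR (sample (INR n) 1)) by lra.
    apply Rmult_le_compat_l with (r := g) in Hfar; [|lra].
    replace (g * (Xe / g)) with Xe in Hfar by (field; lra). exact Hfar. }
  pose proof (psi_close (INR n) 0 Ht Hlarge) as Hc.
  replace (sample (INR n) 0) with n in Hc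
    by (unfold sample; simpl; rewrite Rmult_1_r, floor_nat_INR; reflexivity).
  pose proof (HXe _ HgX).
  unfold Rdist. rewrite Rminus_0_r, Rabs_minus_sym. lra.
Qed.

Lemma psi_uniform_approx t eps : 0 < t -> 0 < eps -> exists k0, forall k z, (k0 <= k)%nat ->
  Rabs (z - t) < t / 2 -> Rabs (psi z - f (sample z k)) <= eps.
Proof.
  destruct HPhi as [_ [_ Hvanish]].
  intros Ht Heps.
  destruct (Hvanish eps Heps) as [Xe [_ HXe]].
  destruct large_eventually as [X HX].
  set (Y := Rmax X (Xe / g)).
  destruct (pow_eventually_above b ((Y + 1) * 2 / t) scale_gt1) as [k0 Hk0].
  exists k0. intros k z Hk Hz. apply Rabs_def2 in Hz.
  assert (Hz0 : 0 < z) by lra.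
  assert (HB := Hk0 (S k) ltac:(lia)).
  destruct (sample_spec z (S k) Hz0).
  assert (Hfar : Y <= INR (sample z (S k))).
  { apply Rmult_le_compat_l with (r := t / 2) in HB; [|lra].
    replace (t / 2 * ((Y + 1) * 2 / t)) with (Y + 1) in HB by (field; lra).
    pose proof (scale_pow_pos (S k)). nra. }
  assert (HYX : X <= Y) by apply Rmax_l. assert (HYe : Xe / g <= Y) by apply Rmax_r.
  assert (HgX : Xe <= g * INR (sample z (S k))).
  { assert (Hf : Xe / g <= INR (sample z (S k))) by lra.
    apply Rmult_le_compat_l with (r := g) in Hf; [|lra].
    replace (g * (Xe / g)) with Xe in Hf by (field; lra). exact Hf. }
  eapply Rle_trans; [apply psi_close; [exact Hz0 | apply HX; lra]|]. apply HXe, HgX.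
Qed.

Lemma sample_lipschitz t k x y : 0 < t -> INR n0 + 1 <= t / 4 * b ^ k ->
  Rabs (x - t) < t / 2 -> Rabs (y - t) < t / 2 ->
  Rabs (f (sample x k) - f (sample y k)) <= 4 * L / t * Rabs (x - y) + 4 * L / (t * b ^ k).
Proof.
  intros Ht HM Hx Hy.
  assert (Hn01 : 1 <= INR n0) by (apply (le_INR 1); lia).
  set (B0 := b ^ k) in *. set (M := t / 4 * B0) in *.
  assert (HB0 : 0 < B0) by apply scale_pow_pos.
  assert (Hsample : forall z, Rabs (z - t) < t / 2 ->
            M <= INR (sample z k) /\ (n0 <= sample z k)%nat /\
            z * B0 - 1 < INR (sample z k) <= z * B0).
  { intros z Hz. apply Rabs_def2 in Hz. destruct (sample_spec z k ltac:(lra)) as [S1 S2].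
    fold B0 in S1, S2.
    assert (M <= INR (sample z k)) by (unfold M in *; nra).
    split; [lra|]. split; [apply INR_le; lra | lra]. }
  destruct (Hsample x Hx) as [Mx [Nx Sx]]. destruct (Hsample y Hy) as [My [Ny Sy]].
  eapply Rle_trans; [apply (Hlip _ _ M); [exact Nx | exact Ny | lra | exact Mx | exact My]|].
  assert (Hd : Rabs (INR (sample x k) - INR (sample y k)) <= Rabs (x - y) * B0 + 1).
  { rewrite <- (Rabs_pos_eq B0), <- Rabs_mult by lra. apply Rabs_le.
    pose proof (Rabs_le_bounds _ _ (Rle_refl (Rabs ((x - y) * B0)))). lra. }
  apply Rle_trans with (L * (Rabs (x - y) * B0 + 1) / M).
  - unfold Rdiv. apply Rmult_le_compat_r; [left; apply Rinv_0_lt_compat; lra|].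
    apply Rmult_le_compat_l; auto.
  - right. unfold M. field. lra.
Qed.

Lemma psi_lipschitz t : 0 < t -> forall x y, Rabs (x - t) < t / 2 -> Rabs (y - t) < t / 2 ->
  Rabs (psi x - psi y) <= 4 * L / t * Rabs (x - y).
Proof.
  intros Ht x y Hx Hy. apply Rle_plus_epsilon. intros eps Heps.
  destruct (psi_uniform_approx t (eps / 3) Ht ltac:(lra)) as [k0 Hk0].
  assert (HZ1 : 0 <= 4 * (INR n0 + 1) / t)
    by (apply Rmult_le_pos; [pose proof (pos_INR n0); lra | left; apply Rinv_0_lt_compat; lra]).
  assert (HZ2 : 0 <= 12 * L / (t * eps))
    by (apply Rmult_le_pos; [lra | left; apply Rinv_0_lt_compat; nra]).
  destruct (pow_eventually_above b (4 * (INR n0 + 1) / t + 12 * L / (t * eps)) scale_gt1)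
    as [k1 Hk1].
  set (k := max k0 k1).
  assert (HB := Hk1 k ltac:(lia)). pose proof (scale_pow_pos k).
  assert (HM : INR n0 + 1 <= t / 4 * b ^ k).
  { apply Rmult_le_reg_l with (4 / t); [apply Rdiv_lt_0_compat; lra|].
    replace (4 / t * (t / 4 * b ^ k)) with (b ^ k) by (field; lra).
    replace (4 / t * (INR n0 + 1)) with (4 * (INR n0 + 1) / t) by (field; lra). lra. }
  assert (Hround : 4 * L / (t * b ^ k) <= eps / 3).
  { apply Rmult_le_reg_r with (t * b ^ k); [nra|].
    unfold Rdiv at 1. rewrite Rmult_assoc, Rinv_l, Rmult_1_r by nra.
    assert (Hb : 12 * L / (t * eps) <= b ^ k) by lra.
    apply Rmult_le_compat_l with (r := t * eps / 3) in Hb; [|nra].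
    replace (t * eps / 3 * (12 * L / (t * eps))) with (4 * L) in Hb by (field; lra). nra. }
  pose proof (sample_lipschitz t k x y Ht HM Hx Hy).
  pose proof (Hk0 k x ltac:(lia) Hx). pose proof (Hk0 k y ltac:(lia) Hy).
  replace (psi x - psi y)
    with ((psi x - f (sample x k)) + (f (sample x k) - f (sample y k)) - (psi y - f (sample y k)))
    by ring.
  eapply Rle_trans; [apply Rabs_triang|]. rewrite Rabs_Ropp.
  eapply Rle_trans; [apply Rplus_le_compat_r, Rabs_triang|]. lra.
Qed.

Lemma psi_continuous t : 0 < t -> continuity_pt psi t.
Proof.
  intros Ht eps Heps.
  set (K := 4 * L / t).
  assert (HK : 0 <= K) by (apply Rmult_le_pos; [lra | left; apply Rinv_0_lt_compat; lra]).
  exists (Rmin (t / 2) (eps / (K + 1))). split; [apply Rmin_pos; [lra | apply Rdiv_lt_0_compat; lra]|].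
  intros x [_ Hx]. simpl in Hx |- *. unfold R_dist in *.
  assert (Hx1 : Rabs (x - t) < t / 2) by (eapply Rlt_le_trans; [exact Hx | apply Rmin_l]).
  assert (Hx2 : Rabs (x - t) < eps / (K + 1)) by (eapply Rlt_le_trans; [exact Hx | apply Rmin_r]).
  assert (Ht0 : Rabs (t - t) < t / 2) by (rewrite Rminus_diag, Rabs_R0; lra).
  eapply Rle_lt_trans; [apply (psi_lipschitz t Ht x t Hx1 Ht0)|]. fold K.
  apply Rle_lt_trans with (K * (eps / (K + 1))); [apply Rmult_le_compat_l; lra|].
  replace (K * (eps / (K + 1))) with (eps - eps / (K + 1)) by (field; lra).
  assert (0 < eps / (K + 1)) by (apply Rdiv_lt_0_compat; lra). lra.
Qed.

Lemma scaling_limit :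
  (forall t, 0 < t -> continuity_pt psi t) /\ locally_lipschitz_pos psi /\
  (forall t, 0 < t -> psi (alpha * t) = psi t) /\ Un_cv (fun n => f n - psi (INR n)) 0.
Proof.
  split; [exact psi_continuous|]. split; [|split; [exact psi_periodic | exact psi_approximates]].
  intros t Ht. exists (t / 2), (4 * L / t). split; [lra|]. split.
  - apply Rmult_le_pos; [lra | left; apply Rinv_0_lt_compat; lra].
  - exact (psi_lipschitz t Ht).
Qed.

End ScalingLimit.

Theorem theorem2p3 (p : nat -> nat -> R) (alpha : R) (a : nat) :
  condition1 p alpha -> (1 <= a)%nat ->
  forall i : nat, (1 <= i)%nat ->
    exists psi : R -> R,
      (forall t, 0 < t -> continuity_pt psi t) /\
      locally_lipschitz_pos psi /\
      (forall t, 0 < t -> psi (alpha * t) = psi t) /\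
      (* pi_i(n) = lim_K visit_within p a i K n *)
      forall pi : nat -> R,
        (forall n, (1 <= n)%nat -> Un_cv (fun K => visit_within p a i K n) (pi n)) ->
        Un_cv (fun n => pi n - psi (INR n)) 0.
Proof.
  intros Hcond _ i _.
  destruct Hcond as [Hpmf [_ [Hmono [Halpha [e [delta [He
    [[C1 [N1 [_ HC1]]] [[C2 [N2 HC2]] [C3 [N3 [_ HC3]]]]]]]]]]]].
  set (f := visit_prob p a i).
  destruct (visit_prob_lipschitz p alpha a i delta e C1 C2 C3 N1 N2 N3
              Hpmf Hmono Halpha He HC1 HC2 HC3) as [L [n0 [HL [Hn0 Hlip]]]].
  destruct (visit_prob_potential_step p alpha a i delta e C1 C2 C3 N1 N2 N3
              Hpmf Hmono Halpha He HC1 HC2 HC3) as [Phi [Ms [HPhi Hstep]]].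
  destruct (scaling_limit f alpha ((1 + alpha) / 2) Phi L n0 Ms ltac:(lra) ltac:(lra)
              HPhi HL Hn0 Hlip Hstep) as [Hcont [Hlipschitz [Hperiodic Hasymp]]].
  exists (psi f alpha). split; [exact Hcont|]. split; [exact Hlipschitz|].
  split; [exact Hperiodic|].
  intros pi Hpi eps Heps. destruct (Hasymp eps Heps) as [N HN].
  exists (max N 1). intros n Hn.
  replace (pi n) with (f n) by (apply (UL_sequence _ _ _ (visit_prob_cv p a i Hpmf n)); apply Hpi; lia).
  apply HN. lia.
Qed.
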